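(* Consider two simple totally unimodular matrices $$A_1=\begin{pmatrix}B&0&0&0\\ b_1^t&1&0&1\\ b_2^t&0&1&1\end{pmatrix},\qquad A_2=\begin{pmatrix}c_1^t&1&0&1\\ c_2^t&0&1&1\\ C&0&0&0\end{pmatrix},$$ where $B\in M_{g_1,n_1}(\mathbb{Z})$, $C\in M_{g_2,n_2}(\mathbb{Z})$ and $b_1,b_2,c_1,c_2$ are integer vectors, and assume that $\overline{Q_i}$ is well-suited for $A_i$ for $i=1,2$. Then one can write $$\overline{Q_1}=\begin{pmatrix}Q_1&r_1&s_1\\ r_1^t&1&-1/2\\ s_1^t&-1/2&1\end{pmatrix},\qquad \overline{Q_2}=\begin{pmatrix}1&-1/2&r_2^t\\ -1/2&1&s_2^t\\ r_2&s_2&Q_2\end{pmatrix}$$ with $Q_i\in M_{g_i,g_i}(\mathbb{R})$ and $r_i,s_i\in\mathbb{R}^{g_i}$, and, setting $$M=\tfrac43\left(r_1r_2^t+s_1s_2^t\right)+\tfrac23\left(r_1s_2^t+s_1r_2^t\right)\in M_{g_1,g_2}(\mathbb{R}),$$ the matrix $$\overline{Q}:=\begin{pmatrix}Q_1&r_1&s_1&M\\ r_1^t&1&-1/2&r_2^t\\ s_1^t&-1/2&1&s_2^t\\ M^t&r_2&s_2&Q_2\end{pmatrix}\ \text{ is well-suited for }\ A=\begin{pmatrix}B&0&0&0&0\\ b_1^t&c_1^t&1&0&1\\ b_2^t&c_2^t&0&1&1\\ 0&C&0&0&0\end{pmatrix}.$$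
   Context: A real matrix is totally unimodular if every square submatrix has determinant $-1,0$ or $1$; it is simple if it has no zero column and no two proportional columns. For a simple totally unimodular $A\in M_{g,n}(\mathbb{Z})$, a symmetric matrix $Q\in M_{g,g}(\mathbb{R})$ is well-suited for $A$ if $Q$ is positive definite and for every $\xi\in\mathbb{Z}^g\setminus\{0\}$ one has $\xi^tQ\xi\ge1$, with equality if and only if $\xi$ or $-\xi$ is a column vector of $A$. *)

From HB Require Import structures.
From mathcomp Require Import all_boot all_order all_algebra.
From mathcomp Require Import reals.
Set Implicit Arguments. Unset Strict Implicit. Unset Printing Implicit Defensive.
Import Order.TTheory GRing.Theory Num.Theory.
Local Open Scope ring_scope.

Definition totally_unimodular (g n : nat) (A : 'M[int]_(g, n)) : Prop :=
  forall (k : nat) (f : 'I_k -> 'I_g) (h : 'I_k -> 'I_n),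
    injective f -> injective h ->
    \det (mxsub f h A) \in [:: -1; 0; 1].

Definition simple_mx (g n : nat) (A : 'M[int]_(g, n)) : Prop :=
  (forall j : 'I_n, col j A != 0) /\
  (forall j k : 'I_n, j != k ->
     ~ exists l : rat, map_mx intr (col j A) = l *: map_mx intr (col k A)).

Definition qform (R : realType) (g : nat) (Q : 'M[R]_g) (xi : 'cV[R]_g) : R :=
  (xi^T *m Q *m xi) 0 0.

Definition int_vec (R : realType) (g : nat) (xi : 'cV[int]_g) : 'cV[R]_g :=
  map_mx (fun z : int => z%:~R) xi.

Definition pos_def (R : realType) (g : nat) (Q : 'M[R]_g) : Prop :=
  forall x : 'cV[R]_g, x != 0 -> 0 < qform Q x.

Definition well_suited (R : realType) (g n : nat) (Q : 'M[R]_g)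
    (A : 'M[int]_(g, n)) : Prop :=
  Q^T = Q /\ pos_def Q /\
  forall xi : 'cV[int]_g, xi != 0 ->
    1 <= qform Q (int_vec R xi) /\
    (qform Q (int_vec R xi) = 1 <->
       exists j : 'I_n, col j A = xi \/ col j A = - xi).

(* The 2x3 block [[1,0,1],[0,1,1]]. *)
Definition E23 : 'M[int]_(2, 3) :=
  \matrix_(i < 2, j < 3) (if j == 2 :> nat then 1 else ((i : nat) == j)%:~R).

Definition T22 (R : realType) : 'M[R]_2 :=
  \matrix_(i < 2, j < 2) (if i == j :> nat then 1 else - (1 / 2)).

Definition A1mx (g1 n1 : nat) (B : 'M[int]_(g1, n1)) (b1 b2 : 'rV[int]_n1)
  : 'M[int]_(g1 + 2, n1 + 3) := block_mx B 0 (col_mx b1 b2) E23.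

Definition A2mx (g2 n2 : nat) (C : 'M[int]_(g2, n2)) (c1 c2 : 'rV[int]_n2)
  : 'M[int]_(2 + g2, n2 + 3) := block_mx (col_mx c1 c2) E23 C 0.

Definition Amx (g1 n1 g2 n2 : nat) (B : 'M[int]_(g1, n1)) (b1 b2 : 'rV[int]_n1)
    (C : 'M[int]_(g2, n2)) (c1 c2 : 'rV[int]_n2)
  : 'M[int]_(g1 + 2 + g2, n1 + n2 + 3) :=
  col_mx
    (col_mx (row_mx (row_mx B 0) 0)
            (row_mx (row_mx (col_mx b1 b2) (col_mx c1 c2)) E23))
    (row_mx (row_mx 0 C) 0).

Definition Q1bar_shape (R : realType) (g1 : nat) (Q1 : 'M[R]_g1)
    (r1 s1 : 'cV[R]_g1) : 'M[R]_(g1 + 2) :=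
  block_mx Q1 (row_mx r1 s1) (col_mx r1^T s1^T) (T22 R).

Definition Q2bar_shape (R : realType) (g2 : nat) (Q2 : 'M[R]_g2)
    (r2 s2 : 'cV[R]_g2) : 'M[R]_(2 + g2) :=
  block_mx (T22 R) (col_mx r2^T s2^T) (row_mx r2 s2) Q2.

Definition Mmx (R : realType) (g1 g2 : nat) (r1 s1 : 'cV[R]_g1)
    (r2 s2 : 'cV[R]_g2) : 'M[R]_(g1, g2) :=
  (4 / 3) *: (r1 *m r2^T + s1 *m s2^T) + (2 / 3) *: (r1 *m s2^T + s1 *m r2^T).

Definition Qbar_glued (R : realType) (g1 g2 : nat) (Q1 : 'M[R]_g1)
    (r1 s1 : 'cV[R]_g1) (Q2 : 'M[R]_g2) (r2 s2 : 'cV[R]_g2)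
  : 'M[R]_(g1 + 2 + g2) :=
  let M := Mmx r1 s1 r2 s2 in
  block_mx (Q1bar_shape Q1 r1 s1) (col_mx M (col_mx r2^T s2^T))
           (row_mx M^T (row_mx r2 s2)) Q2.

From HB Require Import structures.
From mathcomp Require Import all_boot all_order all_algebra.
From mathcomp Require Import reals.
From mathcomp Require Import ring lra.
Import Order.TTheory GRing.Theory Num.Theory.
Set Implicit Arguments. Unset Strict Implicit. Unset Printing Implicit Defensive.
Local Open Scope ring_scope.

(* Write N(u, v) = u^2 - uv + v^2 for the form of the 2x2 block T22.  Completing
   the square in the two shared coordinates gives
     Qbar_1(x, w) = S1(x) + N(w + c1(x)),   Qbar_2(w, y) = S2(y) + N(w + c2(y)),
   with S_i the Schur complement of T22 and c_i linear, and the choice of M is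
   exactly what makes the glued form equal to S1(x) + S2(y) + N(w + c1(x) + c2(y)).
   Positive definiteness follows at once.  Every translate of Z^2 contains a
   point where N <= 1/3, so Qbar_i >= 1 on nonzero integral vectors forces
   S_i >= 2/3 on nonzero integral vectors.  Hence an integral (x, w, y) with
   x <> 0 and y <> 0 has value >= 4/3, while for x = 0 or y = 0 the glued form
   restricts to Qbar_2 or Qbar_1, whose minimal vectors are the columns of A2
   and A1 up to sign, and these embed as the columns of A.  Finally, the value
   1 of Qbar_i at the three columns of [[1,0,1],[0,1,1]] forces its 2x2 block
   to be T22. *)

Section HexNorm.
Variable R : realType.

Definition hex_norm (u v : R) : R := u ^+ 2 - u * v + v ^+ 2.

Lemma hex_normC u v : hex_norm u v = hex_norm v u.
Proof. by rewrite /hex_norm; ring. Qed.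

Lemma hex_norm_ge0 u v : 0 <= hex_norm u v.
Proof. by rewrite /hex_norm; nra. Qed.

Lemma hex_norm_gt0 u v : (u != 0) || (v != 0) -> 0 < hex_norm u v.
Proof.
move=> uv; suff: 0 < u ^+ 2 + v ^+ 2 by rewrite /hex_norm; nra.
by case/orP: uv => nz; [apply: ltr_pwDl|apply: ltr_wpDl];
  rewrite ?sqr_ge0 // lt_def sqrf_eq0 nz sqr_ge0.
Qed.

(* The diagonal cuts the unit square into two triangles that are equilateral
   for [hex_norm], with squared circumradius 1/3. *)
Lemma hex_norm_triangle u v : 0 <= v -> v <= u -> u <= 1 ->
  [\/ hex_norm u v <= 1/3, hex_norm (u - 1) v <= 1/3 |
      hex_norm (u - 1) (v - 1) <= 1/3].
Proof.
rewrite /hex_norm => v0 vu u1.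
have [uv1|uv1] := lerP (u + v) 1; have [h|h] := lerP (2 * u - v) 1.
- by apply: Or31; nra.
- by apply: Or32; nra.
- by have [h'|h'] := lerP (2 * v) u; [apply: Or32|apply: Or33]; nra.
- by have [h'|h'] := lerP (2 * v) u; [apply: Or32|apply: Or33]; nra.
Qed.

Lemma hex_norm_unit_square u v : 0 <= u <= 1 -> 0 <= v <= 1 ->
  exists a b : int, hex_norm (u + a%:~R) (v + b%:~R) <= 1/3.
Proof.
wlog vu : u v / v <= u => [hwlog|/andP[_ u1] /andP[v0 _]].
  have [|uv] := lerP v u; first exact: hwlog.
  move=> hu hv; have [a [b h]] := hwlog v u (ltW uv) hv hu.
  by exists b, a; rewrite hex_normC.
have m1 : (-1 : int)%:~R = -1 :> R by [].
case: (hex_norm_triangle v0 vu u1) => h.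
- by exists 0, 0; rewrite !addr0.
- by exists (-1), 0; rewrite m1 addr0.
- by exists (-1), (-1); rewrite m1.
Qed.

Lemma hex_norm_covering (p q : R) :
  exists a b : int, hex_norm (a%:~R + p) (b%:~R + q) <= 1/3.
Proof.
have frac (t : R) : 0 <= t - (Num.floor t)%:~R <= 1.
  by have := floor_le t; have := floorD1_gt t; rewrite intrD => *; apply/andP; split; lra.
have [a [b h]] := hex_norm_unit_square (frac p) (frac q).
exists (a - Num.floor p), (b - Num.floor q).
have swap (x y z : R) : x - y + z = z - y + x by ring.
by rewrite !intrB [X in hex_norm X _]swap [X in hex_norm _ X]swap.
Qed.
End HexNorm.

Lemma int_vec_col_mx (R : realType) g1 g2 (u : 'cV[int]_g1) (v : 'cV[int]_g2) :
  int_vec R (col_mx u v) = col_mx (int_vec R u) (int_vec R v).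
Proof. exact: map_col_mx. Qed.

Lemma int_vec0 (R : realType) g : int_vec R (0 : 'cV[int]_g) = 0.
Proof. by apply/matrixP=> i j; rewrite !mxE. Qed.

Definition cv2 (T : Type) (a b : T) : 'cV[T]_2 :=
  \col_(i < 2) if i == 0 :> nat then a else b.

Lemma cv2_0 (T : Type) (a b : T) : cv2 a b 0 0 = a.
Proof. by rewrite mxE. Qed.

Lemma cv2_1 (T : Type) (a b : T) : cv2 a b 1 0 = b.
Proof. by rewrite mxE. Qed.

Lemma int_vec_cv2 (R : realType) (a b : int) : int_vec R (cv2 a b) = cv2 a%:~R b%:~R.
Proof. by apply/matrixP=> i j; rewrite !mxE; case: ifP. Qed.

Lemma cv2_eq0 (T : zmodType) (a b : T) : (cv2 a b == 0) = (a == 0) && (b == 0).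
Proof.
apply/eqP/andP=> [ab0|[/eqP-> /eqP->]].
  by split; apply/eqP; [rewrite -(cv2_0 a b)|rewrite -(cv2_1 a b)]; rewrite ab0 mxE.
by apply/matrixP=> i j; rewrite !mxE; case: ifP.
Qed.

Lemma col_E23 : [/\ col 0 E23 = cv2 1 0, col 1 E23 = cv2 0 1 & col 2 E23 = cv2 1 1].
Proof. by split; apply/matrixP=> i j; rewrite !mxE; case: i => [[|[]]]. Qed.

Lemma cv2E (T : Type) (w : 'cV[T]_2) : w = cv2 (w 0 0) (w 1 0).
Proof.
apply/matrixP=> i j; rewrite !mxE (ord1 j).
by case: i => [[|[|]]] //= ?; congr (w _ _); apply: val_inj.
Qed.

Lemma col_mx3_split (T : Type) m1 m2 m3 (v : 'cV[T]_(m1 + m2 + m3)) :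
  exists x w y, v = col_mx (col_mx x w) y.
Proof. by exists (usubmx (usubmx v)), (dsubmx (usubmx v)), (dsubmx v); rewrite !vsubmxK. Qed.

Section BilinearForm.
Variable R : realType.

Definition bform m n (B : 'M[R]_(m, n)) (u : 'cV[R]_m) (v : 'cV[R]_n) : R :=
  (u^T *m B *m v) 0 0.

Definition vdot m (u v : 'cV[R]_m) : R := (u^T *m v) 0 0.

Lemma bform_block m1 m2 n1 n2 (A : 'M[R]_(m1, n1)) (B : 'M[R]_(m1, n2))
    (C : 'M[R]_(m2, n1)) (D : 'M[R]_(m2, n2)) u1 u2 v1 v2 :
  bform (block_mx A B C D) (col_mx u1 u2) (col_mx v1 v2) =
  bform A u1 v1 + bform B u1 v2 + bform C u2 v1 + bform D u2 v2.
Proof. by rewrite /bform tr_col_mx mul_row_block mul_row_col !mulmxDl !mxE addrACA !addrA. Qed.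

Lemma bform_col m1 m2 n (A : 'M[R]_(m1, n)) (B : 'M[R]_(m2, n)) u1 u2 v :
  bform (col_mx A B) (col_mx u1 u2) v = bform A u1 v + bform B u2 v.
Proof. by rewrite /bform tr_col_mx mul_row_col mulmxDl mxE. Qed.

Lemma bform_tr m n (A : 'M[R]_(m, n)) u v : bform A^T u v = bform A v u.
Proof.
rewrite /bform (_ : u^T *m A^T *m v = (v^T *m A *m u)^T) ?mxE //.
by rewrite !trmx_mul !trmxK mulmxA.
Qed.

Lemma bformD m n (A B : 'M[R]_(m, n)) u v :
  bform (A + B) u v = bform A u v + bform B u v.
Proof. by rewrite /bform mulmxDr mulmxDl mxE. Qed.

Lemma bformZ m n c (A : 'M[R]_(m, n)) u v : bform (c *: A) u v = c * bform A u v.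
Proof. by rewrite /bform -scalemxAr -scalemxAl mxE. Qed.

Lemma bform0l m n (A : 'M[R]_(m, n)) v : bform A 0 v = 0.
Proof. by rewrite /bform trmx0 !mul0mx mxE. Qed.

Lemma bform0r m n (A : 'M[R]_(m, n)) u : bform A u 0 = 0.
Proof. by rewrite /bform mulmx0 mxE. Qed.

Lemma vdot0l m (r : 'cV[R]_m) : vdot 0 r = 0.
Proof. by rewrite /vdot trmx0 mul0mx mxE. Qed.

Lemma bform_outer m n (r : 'cV[R]_m) (s : 'cV[R]_n) x y :
  bform (r *m s^T) x y = vdot x r * vdot y s.
Proof.
rewrite /bform /vdot -!mulmxA mulmxA mxE big_ord1 -[s^T *m y]trmxK trmx_mul trmxK.
by rewrite [X in _ * X]mxE.
Qed.

Lemma bform_row2 m (r s : 'cV[R]_m) x (w : 'cV[R]_2) :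
  bform (row_mx r s) x w = vdot x r * w 0 0 + vdot x s * w 1 0.
Proof.
rewrite /bform /vdot mxE !big_ord_recl big_ord0 addr0 mul_mx_row.
rewrite (_ : lift ord0 ord0 = rshift 1 (0 : 'I_1) :> 'I_(1 + 1)) ?row_mxEr; last exact: val_inj.
rewrite (_ : ord0 = lshift 1 (0 : 'I_1) :> 'I_(1 + 1)) ?row_mxEl; last exact: val_inj.
by congr (_ * w _ _ + _ * w _ _); apply: val_inj.
Qed.

Lemma bform_row m n1 n2 (A : 'M[R]_(m, n1)) (B : 'M[R]_(m, n2)) u v1 v2 :
  bform (row_mx A B) u (col_mx v1 v2) = bform A u v1 + bform B u v2.
Proof. by rewrite /bform mul_mx_row mul_row_col mxE. Qed.

Lemma qformE m (Q : 'M[R]_m) u : qform Q u = bform Q u u.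
Proof. by []. Qed.
End BilinearForm.

Section TwoByTwo.
Variable R : realType.

Lemma qform_cv2 (D : 'M[R]_2) a b :
  qform D (cv2 a b) = a ^+ 2 * D 0 0 + a * b * (D 0 1 + D 1 0) + b ^+ 2 * D 1 1.
Proof.
rewrite /qform !mxE !big_ord_recl !big_ord0 !mxE !big_ord_recl !big_ord0 !mxE /=.
rewrite (_ : lift ord0 ord0 = 1); last exact: val_inj.
rewrite -[ord0]/(0 : 'I_2); ring.
Qed.

Lemma qform_T22 (w : 'cV[R]_2) : qform (T22 R) w = hex_norm (w 0 0) (w 1 0).
Proof. by rewrite {1}[w]cv2E qform_cv2 !mxE /= /hex_norm; lra. Qed.

Lemma T22_from_qform (D : 'M[R]_2) : D^T = D ->
  qform D (cv2 1 0) = 1 -> qform D (cv2 0 1) = 1 -> qform D (cv2 1 1) = 1 ->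
  D = T22 R.
Proof.
move=> symD; rewrite !qform_cv2 => D00 D11 D01.
have D10 : D 1 0 = D 0 1 by rewrite -{1}symD mxE.
apply/matrixP=> i j; rewrite mxE.
have [-> | ->] : i = 0 \/ i = 1 by case: i => [[|[|]]] // ?; [left|right]; apply: val_inj.
all: have [-> | ->] : j = 0 \/ j = 1 by case: j => [[|[|]]] // ?; [left|right]; apply: val_inj.
all: rewrite /=; lra.
Qed.
End TwoByTwo.

Section SchurComplement.
Variables (R : realType) (g : nat).
Implicit Types (Q : 'M[R]_g) (r s x : 'cV[R]_g) (w : 'cV[R]_2).

(* [(hex_shift1, hex_shift2)] is [T22^-1] applied to [(vdot x r, vdot x s)], and
   [schur_form] is the Schur complement of [T22] in [Q1bar_shape Q r s]. *)
Definition hex_shift1 r s x : R := (4 * vdot x r + 2 * vdot x s) / 3.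
Definition hex_shift2 r s x : R := (2 * vdot x r + 4 * vdot x s) / 3.

Definition schur_form Q r s x : R :=
  bform Q x x - hex_norm (hex_shift1 r s x) (hex_shift2 r s x).

Lemma qform_Q1bar_shape Q r s x w :
  qform (Q1bar_shape Q r s) (col_mx x w) =
  schur_form Q r s x + hex_norm (w 0 0 + hex_shift1 r s x) (w 1 0 + hex_shift2 r s x).
Proof.
rewrite qformE bform_block -[bform (T22 R) _ _]qformE qform_T22 -tr_row_mx bform_tr bform_row2.
by rewrite /schur_form /hex_shift1 /hex_shift2 /hex_norm; field.
Qed.

Lemma qform_Q2bar_Q1bar_shape Q r s x w :
  qform (Q2bar_shape Q r s) (col_mx w x) = qform (Q1bar_shape Q r s) (col_mx x w).
Proof.
by rewrite !qformE !bform_block -!qformE -!tr_row_mx !bform_tr; ring.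
Qed.

Lemma schur_form0 Q r s : schur_form Q r s 0 = 0.
Proof. by rewrite /schur_form /hex_shift1 /hex_shift2 bform0l !vdot0l /hex_norm; ring. Qed.

Lemma hex_shift1_0 r s : hex_shift1 r s 0 = 0.
Proof. by rewrite /hex_shift1 !vdot0l; ring. Qed.

Lemma hex_shift2_0 r s : hex_shift2 r s 0 = 0.
Proof. by rewrite /hex_shift2 !vdot0l; ring. Qed.
End SchurComplement.

Section SchurBounds.
Variables (R : realType) (g : nat) (Q : 'M[R]_g) (r s : 'cV[R]_g).
Local Notation Qbar := (Q1bar_shape Q r s).

Lemma schur_form_gt0 x :
  (forall w, 0 < qform Qbar (col_mx x w)) -> 0 < schur_form Q r s x.
Proof.
move=> /(_ (cv2 (- hex_shift1 r s x) (- hex_shift2 r s x))).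
by rewrite qform_Q1bar_shape cv2_0 cv2_1 !addNr /hex_norm; lra.
Qed.

(* By [hex_norm_covering], [w] can be chosen to make the [hex_norm] term <= 1/3. *)
Lemma schur_form_int_ge (x : 'cV[int]_g) :
  (forall w, 1 <= qform Qbar (int_vec R (col_mx x w))) ->
  2/3 <= schur_form Q r s (int_vec R x).
Proof.
have [a [b cover]] := hex_norm_covering (hex_shift1 r s (int_vec R x))
                                      (hex_shift2 r s (int_vec R x)).
move=> /(_ (cv2 a b)).
rewrite int_vec_col_mx int_vec_cv2 qform_Q1bar_shape cv2_0 cv2_1; lra.
Qed.
End SchurBounds.

Section Embeddings.
Variables (T : zmodType) (g1 g2 : nat).

Definition embedl (v : 'cV[T]_(g1 + 2)) : 'cV[T]_(g1 + 2 + g2) := col_mx v 0.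

Definition embedr (v : 'cV[T]_(2 + g2)) : 'cV[T]_(g1 + 2 + g2) :=
  col_mx (col_mx 0 (usubmx v)) (dsubmx v).

Lemma embedr_col_mx w y : embedr (col_mx w y) = col_mx (col_mx 0 w) y.
Proof. by rewrite /embedr col_mxKu col_mxKd. Qed.

Lemma embedlN v : embedl (- v) = - embedl v.
Proof. by rewrite /embedl opp_col_mx oppr0. Qed.

Lemma embedrN v : embedr (- v) = - embedr v.
Proof. by rewrite -[v]vsubmxK opp_col_mx !embedr_col_mx !opp_col_mx oppr0. Qed.

Lemma embedl_eq0 v : (embedl v == 0) = (v == 0).
Proof. by rewrite col_mx_eq0 eqxx andbT. Qed.

Lemma embedr_eq0 v : (embedr v == 0) = (v == 0).
Proof. by rewrite -[v]vsubmxK embedr_col_mx !col_mx_eq0 eqxx. Qed.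
End Embeddings.

Lemma int_vec_embedl (R : realType) g1 g2 (v : 'cV[int]_(g1 + 2)) :
  int_vec R (embedl g2 v) = embedl g2 (int_vec R v).
Proof. by rewrite int_vec_col_mx int_vec0. Qed.

Lemma int_vec_embedr (R : realType) g1 g2 (v : 'cV[int]_(2 + g2)) :
  int_vec R (embedr g1 v) = embedr g1 (int_vec R v).
Proof. by rewrite -[v]vsubmxK int_vec_col_mx !embedr_col_mx !int_vec_col_mx int_vec0. Qed.

Definition signed_col (g n : nat) (A : 'M[int]_(g, n)) (xi : 'cV[int]_g) : Prop :=
  exists j, col j A = xi \/ col j A = - xi.

Section SignedColumns.
Variables (m1 m n1 n : nat) (f : 'cV[int]_m1 -> 'cV[int]_m)
  (A1 : 'M[int]_(m1, n1)) (A : 'M[int]_(m, n)).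
Hypothesis fN : {morph f : v / - v}.

Lemma signed_col_map :
  (forall j, exists j', col j' A = f (col j A1)) ->
  forall u, signed_col A1 u -> signed_col A (f u).
Proof.
move=> colA u [j Ej]; have [j' Ej'] := colA j.
by exists j'; rewrite Ej'; case: Ej => ->; [left|right; rewrite fN].
Qed.

Lemma signed_col_preimage j j' xi : col j' A = f (col j A1) ->
  col j' A = xi \/ col j' A = - xi -> exists2 u, signed_col A1 u & xi = f u.
Proof.
move=> Ej' [E|E].
  by exists (col j A1); [exists j; left|rewrite -E].
by exists (- col j A1); [exists j; right; rewrite opprK|rewrite fN -Ej' E opprK].
Qed.
End SignedColumns.

Section GluedForm.
Variables (R : realType) (g1 g2 : nat) (Q1 : 'M[R]_g1) (r1 s1 : 'cV[R]_g1)
  (Q2 : 'M[R]_g2) (r2 s2 : 'cV[R]_g2).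

Local Notation Q1bar := (Q1bar_shape Q1 r1 s1).
Local Notation Q2bar := (Q2bar_shape Q2 r2 s2).
Local Notation Qg := (Qbar_glued Q1 r1 s1 Q2 r2 s2).

Lemma bform_Mmx x y : bform (Mmx r1 s1 r2 s2) x y =
  4/3 * (vdot x r1 * vdot y r2 + vdot x s1 * vdot y s2) +
  2/3 * (vdot x r1 * vdot y s2 + vdot x s1 * vdot y r2).
Proof. by rewrite /Mmx bformD !bformZ !bformD !bform_outer. Qed.

Lemma qform_Qbar_glued x w y :
  qform Qg (col_mx (col_mx x w) y) =
  schur_form Q1 r1 s1 x + schur_form Q2 r2 s2 y +
  hex_norm (w 0 0 + hex_shift1 r1 s1 x + hex_shift1 r2 s2 y)
           (w 1 0 + hex_shift2 r1 s1 x + hex_shift2 r2 s2 y).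
Proof.
rewrite qformE bform_block -qformE qform_Q1bar_shape bform_col bform_row.
rewrite -tr_row_mx !bform_tr bform_row2 bform_Mmx.
by rewrite /schur_form /hex_shift1 /hex_shift2 /hex_norm; field.
Qed.

Lemma schur_forms_le_qform_glued x w y :
  schur_form Q1 r1 s1 x + schur_form Q2 r2 s2 y <= qform Qg (col_mx (col_mx x w) y).
Proof. by rewrite qform_Qbar_glued lerDl hex_norm_ge0. Qed.

Lemma qform_glued_embedl v : qform Qg (embedl g2 v) = qform Q1bar v.
Proof.
rewrite -[v]vsubmxK qform_Qbar_glued qform_Q1bar_shape.
by rewrite schur_form0 hex_shift1_0 hex_shift2_0 !addr0.
Qed.

Lemma qform_glued_embedr v : qform Qg (embedr g1 v) = qform Q2bar v.
Proof.
rewrite -[v]vsubmxK embedr_col_mx qform_Qbar_glued qform_Q2bar_Q1bar_shape.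
by rewrite qform_Q1bar_shape schur_form0 hex_shift1_0 hex_shift2_0 !addr0 add0r.
Qed.

Lemma Qbar_glued_sym : Q1bar^T = Q1bar -> Q2bar^T = Q2bar -> Qg^T = Qg.
Proof.
move=> sym1 sym2.
have symQ2 : Q2^T = Q2 by have := congr1 drsubmx sym2; rewrite -trmx_drsub !block_mxKdr.
rewrite /Qbar_glued tr_block_mx sym1 !tr_row_mx !tr_col_mx !trmxK symQ2.
by rewrite (@tr_row_mx _ _ 1 1) (@tr_col_mx _ 1 1) !trmxK.
Qed.

Section PositiveDefinite.
Hypotheses (pd1 : pos_def Q1bar) (pd2 : pos_def Q2bar).

Lemma schur_form1_gt0 x : x != 0 -> 0 < schur_form Q1 r1 s1 x.
Proof. by move=> nx; apply: schur_form_gt0 => w; apply: pd1; rewrite col_mx_eq0 negb_and nx. Qed.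

Lemma schur_form2_gt0 y : y != 0 -> 0 < schur_form Q2 r2 s2 y.
Proof.
move=> ny; apply: schur_form_gt0 => w; rewrite -qform_Q2bar_Q1bar_shape.
by apply: pd2; rewrite col_mx_eq0 negb_and ny orbT.
Qed.

Lemma schur_form2_ge0 y : 0 <= schur_form Q2 r2 s2 y.
Proof.
by have [->|/schur_form2_gt0/ltW] := eqVneq y 0; rewrite ?schur_form0.
Qed.

Lemma Qbar_glued_pos_def : pos_def Qg.
Proof.
move=> v; have [x [w [y ->]]] := col_mx3_split v.
have := schur_forms_le_qform_glued x w y.
have [->|/schur_form1_gt0] := eqVneq x 0; last by have := schur_form2_ge0 y; lra.
have [->|/schur_form2_gt0] := eqVneq y 0; last by rewrite schur_form0; lra.
rewrite !col_mx_eq0 !eqxx /= andbT => _ nw.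
rewrite qform_Qbar_glued !schur_form0 !hex_shift1_0 !hex_shift2_0 !addr0 add0r.
apply: hex_norm_gt0.
by move: nw; rewrite [w]cv2E cv2_eq0 negb_and !cv2_0 !cv2_1.
Qed.
End PositiveDefinite.

Variables (n1 n2 n : nat) (A1 : 'M[int]_(g1 + 2, n1)) (A2 : 'M[int]_(2 + g2, n2))
  (A : 'M[int]_(g1 + 2 + g2, n)).
Hypotheses (ws1 : well_suited Q1bar A1) (ws2 : well_suited Q2bar A2).
Hypothesis signed_col_A1_A : forall u, signed_col A1 u -> signed_col A (embedl g2 u).
Hypothesis signed_col_A2_A : forall u, signed_col A2 u -> signed_col A (embedr g1 u).
Hypothesis signed_col_A_cases : forall xi, signed_col A xi ->
  (exists2 u, signed_col A1 u & xi = embedl g2 u) \/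
  (exists2 u, signed_col A2 u & xi = embedr g1 u).

Lemma schur_form1_int_ge (x : 'cV[int]_g1) :
  x != 0 -> 2/3 <= schur_form Q1 r1 s1 (int_vec R x).
Proof.
move=> nx; apply: schur_form_int_ge => w.
by apply: (ws1.2.2 _ _).1; rewrite col_mx_eq0 negb_and nx.
Qed.

Lemma schur_form2_int_ge (y : 'cV[int]_g2) :
  y != 0 -> 2/3 <= schur_form Q2 r2 s2 (int_vec R y).
Proof.
move=> ny; apply: schur_form_int_ge => w.
rewrite int_vec_col_mx -qform_Q2bar_Q1bar_shape -int_vec_col_mx.
by apply: (ws2.2.2 _ _).1; rewrite col_mx_eq0 negb_and ny orbT.
Qed.

Lemma glued_int_cases xi : xi != 0 ->
  [\/ exists2 u, u != 0 & xi = embedl g2 u,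
      exists2 u, u != 0 & xi = embedr g1 u |
      4/3 <= qform Qg (int_vec R xi)].
Proof.
case: (col_mx3_split xi) => x [w [y ->]].
have [-> nz|nx] := eqVneq x 0.
  apply: Or32; exists (col_mx w y); last by rewrite embedr_col_mx.
  by move: nz; rewrite !col_mx_eq0 eqxx.
have [-> _|ny _] := eqVneq y 0.
  by apply: Or31; exists (col_mx x w); rewrite // col_mx_eq0 negb_and nx.
apply: Or33; rewrite !int_vec_col_mx.
have := schur_forms_le_qform_glued (int_vec R x) (int_vec R w) (int_vec R y).
have := schur_form1_int_ge nx; have := schur_form2_int_ge ny; lra.
Qed.

Lemma signed_col_qform_glued xi :
  xi != 0 -> signed_col A xi -> qform Qg (int_vec R xi) = 1.
Proof.
move=> nxi /signed_col_A_cases[[u colu Exi]|[u colu Exi]]; move: nxi; rewrite Exi.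
- rewrite embedl_eq0 int_vec_embedl qform_glued_embedl => nu.
  exact/((ws1.2.2 u nu).2).
- rewrite embedr_eq0 int_vec_embedr qform_glued_embedr => nu.
  exact/((ws2.2.2 u nu).2).
Qed.

Lemma qform_glued_int_ge1 xi : xi != 0 ->
  1 <= qform Qg (int_vec R xi) /\ (qform Qg (int_vec R xi) = 1 -> signed_col A xi).
Proof.
case/glued_int_cases => [[u nu ->]|[u nu ->]|ge43].
- rewrite int_vec_embedl qform_glued_embedl; have [ge1 eq1] := ws1.2.2 u nu.
  by split=> // /eq1/signed_col_A1_A.
- rewrite int_vec_embedr qform_glued_embedr; have [ge1 eq1] := ws2.2.2 u nu.
  by split=> // /eq1/signed_col_A2_A.
- by split=> [|eq1]; [lra|exfalso; lra].
Qed.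

Lemma Qbar_glued_well_suited : well_suited Qg A.
Proof.
split; first exact: Qbar_glued_sym ws1.1 ws2.1.
split; first exact: Qbar_glued_pos_def ws1.2.1 ws2.2.1.
move=> xi nxi; have [ge1 eq1] := qform_glued_int_ge1 nxi.
by split=> //; split=> [/eq1|]; last exact: signed_col_qform_glued.
Qed.
End GluedForm.

Lemma col_lshift_row_mx (T : Type) m p q (X : 'M[T]_(m, p)) (Y : 'M[T]_(m, q)) j :
  col (lshift q j) (row_mx X Y) = col j X.
Proof. by rewrite -col_lsubmx row_mxKl. Qed.

Lemma col_rshift_row_mx (T : Type) m p q (X : 'M[T]_(m, p)) (Y : 'M[T]_(m, q)) j :
  col (rshift p j) (row_mx X Y) = col j Y.
Proof. by rewrite -col_rsubmx row_mxKr. Qed.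

Section AmxColumns.
Variables (g1 n1 g2 n2 : nat) (B : 'M[int]_(g1, n1)) (b1 b2 : 'rV[int]_n1)
  (C : 'M[int]_(g2, n2)) (c1 c2 : 'rV[int]_n2).

Local Notation A1 := (A1mx B b1 b2).
Local Notation A2 := (A2mx C c1 c2).
Local Notation A := (Amx B b1 b2 C c1 c2).

Let colE := (block_mxEv, col_col_mx, col_lshift_row_mx, col_rshift_row_mx, col0).

Lemma col_A1mx_E23 k : col (rshift n1 k) A1 = col_mx 0 (col k E23).
Proof. by rewrite /A1mx !colE. Qed.

Lemma col_A2mx_E23 k : col (rshift n2 k) A2 = col_mx (col k E23) 0.
Proof. by rewrite /A2mx !colE. Qed.
Lemma col_Amx_B j : col (lshift 3 (lshift n2 j)) A = embedl g2 (col (lshift 3 j) A1).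
Proof. by rewrite /Amx /A1mx !colE. Qed.

Lemma col_Amx_C j : col (lshift 3 (rshift n1 j)) A = embedr g1 (col (lshift 3 j) A2).
Proof. by rewrite /Amx /A2mx !colE embedr_col_mx. Qed.

Lemma col_Amx_E23l k : col (rshift (n1 + n2) k) A = embedl g2 (col (rshift n1 k) A1).
Proof. by rewrite /Amx /A1mx !colE. Qed.

Lemma col_Amx_E23r k : col (rshift (n1 + n2) k) A = embedr g1 (col (rshift n2 k) A2).
Proof. by rewrite /Amx /A2mx !colE embedr_col_mx. Qed.

Lemma signed_col_Amx_embedl u : signed_col A1 u -> signed_col A (embedl g2 u).
Proof.
apply: (signed_col_map (@embedlN _ _ g2)) => j.
rewrite -(splitK j); case: (split j) => [j0|k] /=.
  by exists (lshift 3 (lshift n2 j0)); rewrite col_Amx_B.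
by exists (rshift (n1 + n2) k); rewrite col_Amx_E23l.
Qed.

Lemma signed_col_Amx_embedr u : signed_col A2 u -> signed_col A (embedr g1 u).
Proof.
apply: (signed_col_map (@embedrN _ g1 _)) => j.
rewrite -(splitK j); case: (split j) => [j0|k] /=.
  by exists (lshift 3 (rshift n1 j0)); rewrite col_Amx_C.
by exists (rshift (n1 + n2) k); rewrite col_Amx_E23r.
Qed.

Lemma signed_col_Amx xi : signed_col A xi ->
  (exists2 u, signed_col A1 u & xi = embedl g2 u) \/
  (exists2 u, signed_col A2 u & xi = embedr g1 u).
Proof.
case=> j; rewrite -(splitK j); case: (split j) => [j0|k] /= Ej; last first.
  by left; exact: (signed_col_preimage (@embedlN _ _ g2) (col_Amx_E23l k) Ej).
move: Ej; rewrite -(splitK j0); case: (split j0) => [j1|j1] /= Ej.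
  by left; exact: (signed_col_preimage (@embedlN _ _ g2) (col_Amx_B j1) Ej).
by right; exact: (signed_col_preimage (@embedrN _ g1 _) (col_Amx_C j1) Ej).
Qed.

End AmxColumns.

Section Shapes.
Variable R : realType.

Lemma qform_col_mx0l m g (Q : 'M[R]_(m + g)) v :
  qform Q (col_mx 0 v) = qform (drsubmx Q) v.
Proof. by rewrite -{1}[Q]submxK qformE bform_block !bform0l bform0r !add0r. Qed.

Lemma qform_col_mx0r m g (Q : 'M[R]_(g + m)) v :
  qform Q (col_mx v 0) = qform (ulsubmx Q) v.
Proof. by rewrite -{1}[Q]submxK qformE bform_block !bform0l !bform0r !addr0. Qed.

Lemma T22_from_E23 (D : 'M[R]_2) : D^T = D ->
  (forall k, col k E23 != 0 -> qform D (int_vec R (col k E23)) = 1) -> D = T22 R.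
Proof.
move=> symD DE23; have [E0 E1 E2] := col_E23.
have DE k a b : col k E23 = cv2 a b -> cv2 a b != 0 -> qform D (cv2 a%:~R b%:~R) = 1.
  by move=> Ek nz; rewrite -int_vec_cv2 -Ek DE23 // Ek.
apply: T22_from_qform => //;
  [apply: (DE 0 1 0 E0) | apply: (DE 1 0 1 E1) | apply: (DE 2 1 1 E2)].
all: by rewrite cv2_eq0.
Qed.

Lemma well_suited_A1mx_shape g1 n1 (B : 'M[int]_(g1, n1)) b1 b2 (Q : 'M[R]_(g1 + 2)) :
  well_suited Q (A1mx B b1 b2) -> exists Q1 r s, Q = Q1bar_shape Q1 r s.
Proof.
move=> [symQ [_ intQ]].
have DT22 : drsubmx Q = T22 R.
  apply: T22_from_E23 => [|k nzk]; first by rewrite trmx_drsub symQ.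
  rewrite -qform_col_mx0l -(int_vec0 R g1) -int_vec_col_mx -(col_A1mx_E23 B b1 b2).
  apply/(intQ _ _).2; last by exists (rshift n1 k); left.
  by rewrite col_A1mx_E23 col_mx_eq0 negb_and nzk orbT.
exists (ulsubmx Q), (lsubmx (ursubmx Q : 'M_(g1, 1 + 1))),
  (rsubmx (ursubmx Q : 'M_(g1, 1 + 1))).
by rewrite /Q1bar_shape -(@tr_row_mx _ _ 1 1) hsubmxK trmx_ursub symQ -DT22 submxK.
Qed.

Lemma well_suited_A2mx_shape g2 n2 (C : 'M[int]_(g2, n2)) c1 c2 (Q : 'M[R]_(2 + g2)) :
  well_suited Q (A2mx C c1 c2) -> exists Q2 r s, Q = Q2bar_shape Q2 r s.
Proof.
move=> [symQ [_ intQ]].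
have UT22 : ulsubmx Q = T22 R.
  apply: T22_from_E23 => [|k nzk]; first by rewrite trmx_ulsub symQ.
  rewrite -qform_col_mx0r -(int_vec0 R g2) -int_vec_col_mx -(col_A2mx_E23 C c1 c2).
  apply/(intQ _ _).2; last by exists (rshift n2 k); left.
  by rewrite col_A2mx_E23 col_mx_eq0 negb_and nzk.
exists (drsubmx Q), (lsubmx (dlsubmx Q : 'M_(g2, 1 + 1))),
  (rsubmx (dlsubmx Q : 'M_(g2, 1 + 1))).
by rewrite /Q2bar_shape -(@tr_row_mx _ _ 1 1) hsubmxK trmx_dlsub symQ -UT22 submxK.
Qed.
End Shapes.

Theorem lemma4p2p5 (R : realType) (g1 n1 g2 n2 : nat)
    (B : 'M[int]_(g1, n1)) (b1 b2 : 'rV[int]_n1)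
    (C : 'M[int]_(g2, n2)) (c1 c2 : 'rV[int]_n2)
    (Q1bar : 'M[R]_(g1 + 2)) (Q2bar : 'M[R]_(2 + g2)) :
  simple_mx (A1mx B b1 b2) -> totally_unimodular (A1mx B b1 b2) ->
  simple_mx (A2mx C c1 c2) -> totally_unimodular (A2mx C c1 c2) ->
  well_suited Q1bar (A1mx B b1 b2) ->
  well_suited Q2bar (A2mx C c1 c2) ->
  exists (Q1 : 'M[R]_g1) (r1 s1 : 'cV[R]_g1)
         (Q2 : 'M[R]_g2) (r2 s2 : 'cV[R]_g2),
    [/\ Q1bar = Q1bar_shape Q1 r1 s1,
        Q2bar = Q2bar_shape Q2 r2 s2 &
        well_suited (Qbar_glued Q1 r1 s1 Q2 r2 s2) (Amx B b1 b2 C c1 c2)].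
Proof.
move=> _ _ _ _ ws1 ws2.
have [Q1 [r1 [s1 E1]]] := well_suited_A1mx_shape ws1.
have [Q2 [r2 [s2 E2]]] := well_suited_A2mx_shape ws2.
exists Q1, r1, s1, Q2, r2, s2; split=> //.
rewrite {}E1 in ws1; rewrite {}E2 in ws2.
apply: Qbar_glued_well_suited ws1 ws2 _ _ _.
- exact: signed_col_Amx_embedl.
- exact: signed_col_Amx_embedr.
- exact: signed_col_Amx.
Qed.
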